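(* Let $X\in L^\infty$ and let $\mathcal{G}\subseteq\mathcal{F}$ be a sub-$\sigma$-field. A random variable $Y$ belongs to $\mathbb{E}[X\mid\mathcal{G}]$ if and only if $Y\in L^\infty(\mathcal{G})$ and $|X-Y|\le\varepsilon(X,\mathcal{G})$ a.s.
   Context: $\mathbb{K}$ is a local field with non-archimedean absolute value $|\cdot|$. $(\Omega,\mathcal{F},\mathbb{P})$ is a probability space; $L^\infty$ is the space of $\mathbb{K}$-valued random variables $X$ with $\operatorname{ess\,sup}|X|<\infty$; $L^\infty(\mathcal{G})$ its $\mathcal{G}$-measurable subspace. For a non-negative real random variable $S$, $\operatorname{ess\,sup}\{S\mid\mathcal{G}\}:=\sup_{p\ge1}\mathbb{E}[S^p\mid\mathcal{G}]^{1/p}$ (usual real conditional expectation), $\|X\|_\mathcal{G}:=\operatorname{ess\,sup}\{|X|\mid\mathcal{G}\}$, and $\mathbb{E}[X\mid\mathcal{G}]:=\{Y\in L^\infty(\mathcal{G}): \|X-Y\|_\mathcal{G}\le\|X-Z\|_\mathcal{G}\text{ a.s. for all }Z\in L^\infty(\mathcal{G})\}$. This set is non-empty, and $\|X-Y\|_\mathcal{G}$ is a.s. the same for all $Y\in\mathbb{E}[X\mid\mathcal{G}]$; this common random variable is denoted $\varepsilon(X,\mathcal{G})$. *)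

From HB Require Import structures.
From mathcomp Require Import all_boot all_order all_algebra.
From mathcomp Require Import all_classical all_reals all_analysis.
Set Implicit Arguments. Unset Strict Implicit. Unset Printing Implicit Defensive.
Import Order.TTheory GRing.Theory Num.Theory.
Local Open Scope classical_set_scope.
Local Open Scope ring_scope.

Record nonarch_local_field (R : realType) (K : fieldType) (abs : K -> R) : Prop := {
  nlf_ge0 : forall x, 0 <= abs x;
  nlf_abs0 : forall x, abs x = 0 <-> x = 0;
  nlf_absM : forall x y, abs (x * y) = abs x * abs y;
  nlf_ultra : forall x y, abs (x + y) <= Num.max (abs x) (abs y);
  nlf_discrete : exists pi : K, 0 < abs pi < 1 /\
      forall x, x != 0 -> exists n : int, abs x = abs pi ^ n;
  nlf_finite_residue : exists s : seq K,
      forall x, abs x <= 1 -> exists2 r, r \in s & abs (x - r) < 1;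
  nlf_complete : forall u : nat -> K,
      (forall e : R, 0 < e -> exists N, forall m n, (N <= m)%N -> (N <= n)%N ->
          abs (u m - u n) < e) ->
      exists l, forall e : R, 0 < e -> exists N, forall n, (N <= n)%N -> abs (u n - l) < e }.

Section defs.
Context (d : measure_display) (T : measurableType d) (R : realType).
Context (P : probability T R) (K : fieldType) (abs : K -> R).

(** measurability of a K-valued map w.r.t. a family of sets [S]
    (the Borel sigma-algebra of K is generated by the open balls) *)
Definition measK (S : set (set T)) (X : T -> K) :=
  forall (a : K) (r : R), S [set w | abs (X w - a) < r].

Definition measR (S : set (set T)) (f : T -> R) :=
  forall B : set R, measurable B -> S (f @^-1` B).

Definition Linf (S : set (set T)) (X : T -> K) :=
  measK S X /\ exists M : R, {ae P, forall w, abs (X w) <= M}.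

Definition cond_exp_version (G : set (set T)) (f Z : T -> R) :=
  P.-integrable setT (EFin \o f) /\ measR G Z /\ P.-integrable setT (EFin \o Z) /\
  forall A, G A -> (\int[P]_(w in A) (Z w)%:E = \int[P]_(w in A) (f w)%:E)%E.

(** [E] is a version of ess sup{S | G} = sup_{p >= 1} E[S^p | G]^(1/p) *)
Definition cond_esssup_version (G : set (set T)) (S : T -> R) (E : T -> \bar R) :=
  exists Z : nat -> T -> R,
    (forall p, (1 <= p)%N -> cond_exp_version G (fun w => S w ^+ p) (Z p)) /\
    forall w, E w = ereal_sup [set ((Z p w) `^ (p%:R^-1))%:E | p in [set p : nat | (1 <= p)%N]].

Definition condnorm_version (G : set (set T)) (X : T -> K) (E : T -> \bar R) :=
  cond_esssup_version G (fun w => abs (X w)) E.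

Definition condE (G : set (set T)) (X Y : T -> K) :=
  Linf G Y /\
  forall Z, Linf G Z -> forall e1 e2,
    condnorm_version G (fun w => X w - Y w) e1 ->
    condnorm_version G (fun w => X w - Z w) e2 ->
    {ae P, forall w, (e1 w <= e2 w)%E}.

End defs.

(* Let S = |X - Y| and let Z_p be versions of E[S^p | G], so that ||S||_G = sup_p Z_p^(1/p).
   Two properties of ||S||_G drive the proof. First, S <= ||S||_G a.s.: on
   B = [||S||_G <= c] `&` [c' <= S] with c < c', integrating S^p over the G-set
   [||S||_G <= c] gives c'^p P(B) <= c^p for every p, so P(B) = 0. Second, ||S||_G lies
   below every G-measurable a.s. bound E of S, because Z_p <= c^p on each level set
   [E <= c]. Hence a minimiser Y satisfies |X - Y| <= ||X - Y||_G <= ||X - Y0||_G = eps,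
   and conversely |X - Y| <= eps gives ||X - Y||_G <= eps <= ||X - Z||_G for every Z.
   Measurability of |X - Y| comes from the separability of K: finite pi-adic expansions
   with digits in a set of residue representatives are dense. *)

From HB Require Import structures.
From mathcomp Require Import all_boot all_order all_algebra.
From mathcomp Require Import all_classical all_reals all_analysis.
From mathcomp Require Import measurable_realfun.
Set Implicit Arguments. Unset Strict Implicit. Unset Printing Implicit Defensive.
Import Order.TTheory GRing.Theory Num.Theory.
Local Open Scope classical_set_scope.
Local Open Scope ring_scope.

Lemma exists_exprn_lt (R : realType) (a e : R) :
  0 <= a < 1 -> 0 < e -> exists n : nat, a ^+ n < e.
Proof.
move=> /andP[a0 a1] e0.
have ha : `|a| < 1 by rewrite ger0_norm.
have [N _ HN] := cvgr_dist_lt _ _ (cvg_expr ha) _ e0.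
exists N; have := HN N (leqnn N).
by rewrite /= sub0r normrN ger0_norm ?exprn_ge0.
Qed.

Lemma lee_rat (R : realType) (x y : \bar R) :
  (forall c c' : rat, (ratr c : R) < ratr c' ->
     (y <= (ratr c)%:E)%E -> (x < (ratr c')%:E)%E) ->
  (x <= y)%E.
Proof.
move=> h; rewrite leNgt; apply/negP => yx.
have [u [v [uv yu vx]]] : exists u v : R, [/\ u < v, (y <= u%:E)%E & (v%:E <= x)%E].
  clear h; move: yx; case: x => [s| |]; case: y => [r| |] //= yx.
  - by exists r, s; rewrite -lte_fin.
  - by exists (s - 1), s; rewrite gtrBl ltr01 leNye.
  - by exists r, (r + 1); rewrite ltrDl ltr01 leey.
  - by exists 0, 1; rewrite ltr01 leNye leey.
have [c] := rat_in_itvoo uv; rewrite in_itv /= => /andP[uc cv].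
have [c'] := rat_in_itvoo cv; rewrite in_itv /= => /andP[cc' c'v].
have := h c c' cc' (le_trans yu _); rewrite lee_fin ltW // => /(_ isT).
by rewrite ltNge (le_trans _ vx) // lee_fin ltW.
Qed.

Lemma powR_invn_le (R : realType) (z c : R) (p : nat) :
  (1 <= p)%N -> 0 <= z -> 0 <= c -> (z `^ p%:R^-1 <= c) = (z <= c ^+ p).
Proof.
move=> p1 z0 c0.
have p0 : (p%:R : R) != 0 by rewrite pnatr_eq0 -lt0n.
rewrite -(ler_pXn2r p1) ?nnegrE ?powR_ge0 //.
by congr (_ <= _); rewrite -powR_mulrn ?powR_ge0 // -powRrM mulVf // powRr1.
Qed.

Section nonarchimedean_abs.
Variables (R : realType) (K : fieldType) (abs : K -> R).
Hypothesis hK : nonarch_local_field abs.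

Lemma abs0 : abs 0 = 0.
Proof. by apply/(nlf_abs0 hK). Qed.

Lemma abs1 : abs 1 = 1.
Proof.
have h := nlf_absM hK 1 1; rewrite mulr1 in h.
have h0 : abs 1 != 0 by apply/eqP => /(nlf_abs0 hK)/eqP; rewrite oner_eq0.
by apply: (mulfI h0); rewrite mulr1 -h.
Qed.

Lemma absN x : abs (- x) = abs x.
Proof.
have absN1 : abs (-1) = 1.
  have h := nlf_absM hK (-1) (-1); rewrite mulrNN mulr1 abs1 in h.
  have : abs (-1) ^+ 2 = 1 by rewrite expr2 -h.
  move/eqP; rewrite sqrf_eq1 => /orP[/eqP -> //|/eqP absN1].
  by have := nlf_ge0 hK (-1); rewrite absN1 ler0N1.
by rewrite -mulN1r (nlf_absM hK) absN1 mul1r.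
Qed.

Lemma abs_subC x y : abs (x - y) = abs (y - x).
Proof. by rewrite -absN opprB. Qed.

Lemma absX x n : abs (x ^+ n) = abs x ^+ n.
Proof. by elim: n => [|n IH]; rewrite ?abs1 // !exprS (nlf_absM hK) IH. Qed.

Lemma absV x : x != 0 -> abs x^-1 = (abs x)^-1.
Proof.
move=> x0; have h := nlf_absM hK x x^-1; rewrite mulfV // abs1 in h.
have hx : abs x != 0 by apply/eqP => /(nlf_abs0 hK)/eqP; rewrite (negbTE x0).
by apply: (mulfI hx); rewrite -h mulfV.
Qed.

Lemma abs_ultra_sub x y z : abs (x - z) <= Num.max (abs (x - y)) (abs (y - z)).
Proof. by have := nlf_ultra hK (x - y) (y - z); rewrite addrA subrK. Qed.

End nonarchimedean_abs.

Section pi_expansion.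
Variables (R : realType) (K : fieldType) (abs : K -> R).
Hypothesis hK : nonarch_local_field abs.
Variables (pi : K) (s : seq K).
Hypotheses (hpi : 0 < abs pi < 1)
  (hdisc : forall x, x != 0 -> exists n : int, abs x = abs pi ^ n)
  (hs : forall x, abs x <= 1 -> exists2 r, r \in s & abs (x - r) < 1).

(** [pi_expansion l = \sum_i s_(l_i) pi^i]: the digits are indices into [s]. *)
Definition pi_expansion (l : seq nat) : K :=
  foldr (fun i acc => nth 0 s i + pi * acc) 0 l.

Let pi_neq0 : pi != 0.
Proof. by apply/eqP => pi0; move: hpi; rewrite pi0 (abs0 hK) ltxx. Qed.

Let abs_pi_gt0 : 0 < abs pi.
Proof. by case/andP: hpi. Qed.

Lemma abs_lt1_le_pi z : abs z < 1 -> abs z <= abs pi.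
Proof.
move=> hz; have [->|z0] := eqVneq z 0; first by rewrite (abs0 hK) (ltW abs_pi_gt0).
have [p0 p1] := andP hpi.
case: (hdisc z0) => [[k|k] hk]; rewrite hk in hz *.
- case: k hk hz => [|k] _ hz; first by rewrite expr0z ltxx in hz.
  rewrite -exprnP exprS; apply: ler_piMr; first exact: ltW.
  by apply: exprn_ile1; exact: ltW.
- move: hz; rewrite NegzE -exprnN invf_lt1 ?exprn_gt0 //.
  by rewrite ltNge (exprn_ile1 _ (ltW p0) (ltW p1)).
Qed.

Lemma pi_expansion_approx m x :
  abs x <= 1 -> exists l, abs (x - pi_expansion l) <= abs pi ^+ m.
Proof.
elim: m x => [|m IH] x hx; first by exists [::]; rewrite /= subr0 expr0.
have [r rs hr] := hs hx.
set y := (x - r) / pi.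
have hy : abs y <= 1.
  rewrite /y (nlf_absM hK) (absV hK pi_neq0) ler_pdivrMr // mul1r.
  exact: abs_lt1_le_pi.
have [l hl] := IH y hy.
exists (index r s :: l) => /=; rewrite nth_index //.
have -> : x - (r + pi * pi_expansion l) = pi * (y - pi_expansion l).
  by rewrite mulrBr /y mulrCA mulfV // mulr1 opprD addrA.
by rewrite (nlf_absM hK) exprS ler_pM2l.
Qed.

End pi_expansion.

Lemma exists_dense_seq (R : realType) (K : fieldType) (abs : K -> R) :
  nonarch_local_field abs ->
  exists ds : nat -> K, forall x (e : R), 0 < e -> exists n, abs (x - ds n) < e.
Proof.
move=> hK; have [pi [hpi hdisc]] := nlf_discrete hK.
have [s hs] := nlf_finite_residue hK.
pose ds n := if (unpickle n : option (nat * seq nat)) is Some (k, l)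
  then pi_expansion pi s l / pi ^+ k else 0.
exists ds => x e e0.
have [p0 p1] := andP hpi.
have pi0 : pi != 0 by apply/eqP => pi0; move: p0; rewrite pi0 (abs0 hK) ltxx.
have hpi' : 0 <= abs pi < 1 by rewrite ltW.
have h1x : 0 < 1 + abs x by rewrite ltr_pwDl ?(nlf_ge0 hK).
(* rescale [x] into the unit ball by a power of [pi], then expand it *)
have [k hk] : exists k : nat, abs pi ^+ k < (1 + abs x)^-1.
  by apply: exists_exprn_lt; rewrite ?invr_gt0.
have hxk : abs (x * pi ^+ k) <= 1.
  rewrite (nlf_absM hK) (absX hK) mulrC.
  apply: (@le_trans _ _ ((1 + abs x)^-1 * abs x)).
    by rewrite ler_wpM2r ?(nlf_ge0 hK) // ltW.
  by rewrite mulrC ler_pdivrMr // mul1r lerDr.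
have [m hm] := exists_exprn_lt hpi' (mulr_gt0 e0 (exprn_gt0 k p0)).
have [l hl] := pi_expansion_approx hK hpi hdisc hs m hxk.
exists (pickle (k, l)); rewrite /ds pickleK.
have pk0 : pi ^+ k != 0 by rewrite expf_neq0.
have -> : x - pi_expansion pi s l / pi ^+ k = (x * pi ^+ k - pi_expansion pi s l) / pi ^+ k.
  by rewrite mulrBl mulfK.
rewrite (nlf_absM hK) (absV hK) // (absX hK) ltr_pdivrMr ?exprn_gt0 //.
exact: le_lt_trans hl hm.
Qed.

Lemma measurable_abs_sub d (T : measurableType d) (R : realType)
    (K : fieldType) (abs : K -> R) (X Y : T -> K) :
  nonarch_local_field abs ->
  measK abs measurable X -> measK abs measurable Y ->
  measurable_fun setT (fun w => abs (X w - Y w)).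
Proof.
move=> hK mX mY; have [ds hds] := exists_dense_seq hK.
apply: (measurability (@RGenInftyO.G R)) => [|/= _ [_] [r] -> <-].
  exact: RGenInftyO.measurableE.
(* ultrametricity: [abs (X - Y) < r] iff [X] and [Y] lie in a common ball of radius [r]
   centred at a point of the dense sequence *)
have -> : setT `&` (fun w => abs (X w - Y w)) @^-1` `]-oo, r[ =
    \bigcup_n ([set w | abs (X w - ds n) < r] `&` [set w | abs (Y w - ds n) < r]).
  apply/seteqP; split => w /=.
    rewrite in_itv /= => -[_ hw].
    have [n hn] := hds (X w) r (le_lt_trans (nlf_ge0 hK _) hw).
    exists n => //; split => //=.
    apply: le_lt_trans (abs_ultra_sub hK _ (X w) _) _.
    by rewrite gt_max (abs_subC hK (Y w)) hw hn.
  move=> [n _ [h1 h2]]; rewrite in_itv /=; split => //.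
  apply: le_lt_trans (abs_ultra_sub hK _ (ds n) _) _.
  by rewrite gt_max h1 (abs_subC hK).
by apply: bigcup_measurable => n _; apply: measurableI; [exact: mX|exact: mY].
Qed.

Section ae_lemmas.
Context d (T : measurableType d) (R : realType) (mu : {measure set T -> \bar R}).

Lemma ae_forall_countable (I : countType) (Q : I -> T -> Prop) :
  (forall i, {ae mu, forall w, Q i w}) -> {ae mu, forall w, forall i, Q i w}.
Proof.
move=> hQ.
have := @ae_foralln _ _ _ mu
  (fun n w => if (unpickle n : option I) is Some i then Q i w else True).
case=> [n|N [mN N0 sub]]; first by case: (unpickle n) => [i|]; [exact: hQ|exact: aeW].
exists N; split => // w /= hw; apply: sub => /= hall.
by apply: hw => i; have := hall (pickle i); rewrite pickleK.
Qed.

Lemma ae_not_null (A : set T) :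
  measurable A -> mu A = 0%E -> {ae mu, forall w, ~ A w}.
Proof. by move=> mA A0; exists A; split => // w /= hw; apply: contrapT. Qed.

Lemma ae_le_integral (D : set T) (f g : T -> \bar R) : measurable D ->
  mu.-integrable D f -> mu.-integrable D g ->
  {ae mu, forall w, D w -> (f w <= g w)%E} ->
  (\int[mu]_(w in D) f w <= \int[mu]_(w in D) g w)%E.
Proof.
move=> mD intf intg [N [mN N0 sub]].
rewrite (negligible_integral mN mD intf N0) (negligible_integral mN mD intg N0).
have mDN := measurableD mD mN.
apply: le_integral => //.
- exact: integrableS mD mDN (@subDsetl _ _ _) intf.
- exact: integrableS mD mDN (@subDsetl _ _ _) intg.
move=> w /set_mem [Dw Nw].
by apply: contrapT => hw; apply: Nw; apply: sub => /= h; apply: hw; exact: h.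
Qed.

End ae_lemmas.

Section exists_cond_exp.
Context d (T : measurableType d) (R : realType) (P : probability T R) (G : set (set T)).
Hypotheses (hG : sigma_algebra setT G) (hGF : G `<=` measurable).

Local Notation TG := (g_sigma_algebraType G).

(* E[f | G] is the Radon-Nikodym derivative, on [TG] (i.e. [T] with the sigma-algebra [G]),
   of [A |-> \int_A f dP] with respect to the image of [P] under the identity. *)
Definition idG : T -> TG := id.

Lemma measurable_idG : measurable_fun setT idG.
Proof.
move=> _ B mB; rewrite setTI.
by apply: hGF; rewrite -(measurable_g_measurableTypeE hG).
Qed.

HB.instance Definition _ := isMeasurableFun.Build _ _ T TG idG measurable_idG.

Definition PG := distribution P idG.

Definition integral_charge (f : T -> \bar R) of P.-integrable setT f : set TG -> \bar R :=
  fun A => (\int[P]_(w in A) f w)%E.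

Section integral_charge.
Variables (f : T -> \bar R) (intf : P.-integrable setT f).

Let measurable_TG (A : set TG) : measurable A -> d.-measurable (A : set T).
Proof. by move=> mA; have := measurable_idG measurableT mA; rewrite setTI. Qed.

Let integral_charge0 : integral_charge intf set0 = 0%E.
Proof. by rewrite /integral_charge integral_set0. Qed.

Let integral_charge_fin A : measurable A -> integral_charge intf A \is a fin_num.
Proof.
move=> /measurable_TG mA; apply: integrable_fin_num => //.
exact: integrableS measurableT mA (@subsetT _ _) intf.
Qed.

Let integral_charge_sigma_additive : semi_sigma_additive (integral_charge intf).
Proof.
move=> F mF tF mUF.
exact: (@charge_semi_sigma_additive _ _ _ (induced_charge intf) F
  (fun n => measurable_TG (mF n)) tF (measurable_TG mUF)).
Qed.

HB.instance Definition _ := isCharge.Build _ _ _ (integral_charge intf)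
  integral_charge0 integral_charge_fin integral_charge_sigma_additive.

Lemma integral_charge_dominates : integral_charge intf `<< PG.
Proof.
apply/null_content_dominatesP => A mA PA0.
apply: null_set_integral => //; first exact: measurable_TG.
exact: measurable_funS measurableT (@subsetT _ _) (measurable_int _ intf).
Qed.

End integral_charge.

Lemma exists_cond_exp_version (f : T -> R) :
  P.-integrable setT (EFin \o f) -> exists Z, cond_exp_version P G f Z.
Proof.
move=> intf.
have dom := integral_charge_dominates intf.
set g := Radon_Nikodym (integral_charge intf) PG.
have gint := Radon_Nikodym_integrable dom.
have gfin := Radon_Nikodym_fin_num _ dom.
have mg := measurable_int _ gint.
have fine_gK w : (fine (g w))%:E = g w by rewrite fineK // gfin.
exists (fun w => fine (g w)); split => //; split.
  have mfg : measurable_fun setT (fine \o g).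
    exact: measurableT_comp (fine_measurable measurableT) mg.
  move=> B mB; have := mfg measurableT _ mB.
  by rewrite (measurable_g_measurableTypeE hG) setTI.
have intg : P.-integrable setT (g \o idG).
  apply/integrableP; split; first exact: measurableT_comp mg measurable_idG.
  move/integrableP: gint => [_].
  rewrite /PG /distribution (ge0_integral_pushforward measurable_idG) //.
  by apply: measurableT_comp => //; exact: abse_measurable.
split; first by apply: eq_integrable measurableT _ _ _ intg => w _ /=.
move=> A GA; have mA : measurable (A : set TG) by rewrite (measurable_g_measurableTypeE hG).
under eq_integral do rewrite /= fine_gK.
transitivity (\int[PG]_(w in A) g w)%E; last by rewrite -Radon_Nikodym_integral.
rewrite /PG /distribution (integral_pushforward measurable_idG) //.
exact: integrableS measurableT (hGF GA) (@subsetT _ _) intg.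
Qed.

End exists_cond_exp.

Definition sup_roots (T : Type) (R : realType) (Z : nat -> T -> R) (w : T) : \bar R :=
  ereal_sup [set ((Z p w) `^ (p%:R^-1))%:E | p in [set p : nat | (1 <= p)%N]].

Lemma sup_roots_ge0 (T : Type) (R : realType) (Z : nat -> T -> R) w :
  (0 <= sup_roots Z w)%E.
Proof.
apply: le_trans (@ereal_sup_ubound R _ ((Z 1%N w `^ (1%:R^-1))%:E) _); last by exists 1%N.
by rewrite lee_fin powR_ge0.
Qed.

Lemma sup_roots_leP (T : Type) (R : realType) (Z : nat -> T -> R) w (c : R) :
  (sup_roots Z w <= c%:E)%E <-> forall p, (1 <= p)%N -> Z p w `^ (p%:R^-1) <= c.
Proof.
split=> [h p p1|h]; last by apply: ge_ereal_sup => _ [p p1 <-]; rewrite lee_fin h.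
by rewrite -lee_fin; apply: le_trans h; apply: ereal_sup_ubound; exists p.
Qed.

Section cond_exp_bounds.
Context d (T : measurableType d) (R : realType) (P : probability T R) (G : set (set T)).
Hypotheses (hG : sigma_algebra setT G) (hGF : G `<=` measurable).

Local Notation TG := (g_sigma_algebraType G).

Lemma G_measurableE (A : set T) : G A <-> measurable (A : set TG).
Proof. by rewrite (measurable_g_measurableTypeE hG). Qed.

Lemma G_setT : G setT.
Proof. by apply/G_measurableE; exact: (@measurableT _ TG). Qed.

Lemma G_setI A B : G A -> G B -> G (A `&` B).
Proof. by move=> /G_measurableE mA /G_measurableE mB; apply/G_measurableE; exact: measurableI. Qed.

Lemma G_bigcap (F : nat -> set T) : (forall n, G (F n)) -> G (\bigcap_n F n).
Proof.
by move=> GF; apply/G_measurableE; apply: (@bigcapT_measurable _ TG) => n; exact/G_measurableE.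
Qed.

Lemma measR_gt (Z : T -> R) a : measR G Z -> G [set w | a < Z w].
Proof.
move=> mZ; have -> : [set w | a < Z w] = Z @^-1` `]a, +oo[.
  by apply/seteqP; split => w /=; rewrite in_itv /= andbT.
exact: mZ.
Qed.

Lemma measR_lt (Z : T -> R) a : measR G Z -> G [set w | Z w < a].
Proof.
move=> mZ; have -> : [set w | Z w < a] = Z @^-1` `]-oo, a[.
  by apply/seteqP; split => w /=; rewrite in_itv.
exact: mZ.
Qed.

Let P_fineK (A : set T) : measurable A -> P A = (fine (P A))%:E.
Proof. by move=> mA; rewrite fineK // fin_num_measure. Qed.

Lemma cond_exp_le_on (f Z : T -> R) (B : set T) (k : R) :
  cond_exp_version P G f Z -> G B ->
  {ae P, forall w, B w -> f w <= k} -> {ae P, forall w, B w -> Z w <= k}.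
Proof.
move=> [intf [mZ [intZ hZ]]] GB hf.
pose A n := B `&` [set w | k + n.+1%:R^-1 < Z w].
have GA n : G (A n) by apply: G_setI => //; exact: measR_gt.
have A0 n : P (A n) = 0%E.
  have mA := hGF (GA n); set a := k + n.+1%:R^-1.
  have lb : (a%:E * P (A n) <= \int[P]_(w in A n) (f w)%:E)%E.
    rewrite -hZ // -integral_cst //; apply: le_integral => //.
    - exact: finite_measure_integrable_cst.
    - exact: integrableS measurableT mA (@subsetT _ _) intZ.
    by move=> w /set_mem [_ /= hw]; rewrite lee_fin ltW.
  have ub : (\int[P]_(w in A n) (f w)%:E <= k%:E * P (A n))%E.
    rewrite -integral_cst //; apply: ae_le_integral => //.
    - exact: integrableS measurableT mA (@subsetT _ _) intf.
    - exact: finite_measure_integrable_cst.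
    by apply: filterS hf => w hw [Bw _]; rewrite lee_fin; exact: hw.
  have := le_trans lb ub; rewrite (P_fineK mA) -!EFinM lee_fin.
  rewrite -subr_ge0 -mulrBl /a opprD addrA subrr add0r mulNr oppr_ge0.
  rewrite pmulr_rle0 ?invr_gt0 // => hA.
  by apply/eqP; rewrite eqe eq_le hA fine_ge0 ?measure_ge0.
have := ae_forall_countable (fun n => ae_not_null (hGF (GA n)) (A0 n)).
apply: filterS => w hw Bw; rewrite leNgt; apply/negP => /ltr_add_invr [n hn].
exact: (hw n).
Qed.

Lemma cond_exp_ge0 (f Z : T -> R) :
  cond_exp_version P G f Z -> (forall w, 0 <= f w) -> {ae P, forall w, 0 <= Z w}.
Proof.
move=> [intf [mZ [intZ hZ]]] f_ge0.
pose A n := [set w | Z w < - n.+1%:R^-1].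
have GA n : G (A n) by exact: measR_lt.
have A0 n : P (A n) = 0%E.
  have mA := hGF (GA n); pose a : R := - n.+1%:R^-1.
  have ub : (\int[P]_(w in A n) (f w)%:E <= a%:E * P (A n))%E.
    rewrite -hZ // -integral_cst //; apply: le_integral => //.
    - exact: integrableS measurableT mA (@subsetT _ _) intZ.
    - exact: finite_measure_integrable_cst.
    by move=> w /set_mem /= hw; rewrite lee_fin ltW.
  have := le_trans (integral_ge0 _ (fun w _ => f_ge0 w : (0 <= (f w)%:E)%E)) ub.
  rewrite (P_fineK mA) -EFinM lee_fin /a mulNr oppr_ge0 pmulr_rle0 ?invr_gt0 // => hA.
  by apply/eqP; rewrite eqe eq_le hA fine_ge0 ?measure_ge0.
have := ae_forall_countable (fun n => ae_not_null (hGF (GA n)) (A0 n)).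
apply: filterS => w hw; rewrite leNgt; apply/negP => Z_lt0.
have /ltr_add_invr [n] : 0 < - Z w by rewrite oppr_gt0.
by rewrite add0r => hn; apply: (hw n); rewrite /A /= ltrNr.
Qed.

Lemma cond_exp_pow_ge0 (S : T -> R) (Z : nat -> T -> R) :
  (forall w, 0 <= S w) ->
  (forall p, (1 <= p)%N -> cond_exp_version P G (fun w => S w ^+ p) (Z p)) ->
  {ae P, forall w p, (1 <= p)%N -> 0 <= Z p w}.
Proof.
move=> S_ge0 hZ; apply: ae_foralln => -[|p]; first by apply: aeW.
by apply: filterS (cond_exp_ge0 (hZ p.+1 isT) (fun w => exprn_ge0 _ (S_ge0 w))) => w.
Qed.

Lemma G_sup_roots_le (Z : nat -> T -> R) (c : R) :
  (forall p, (1 <= p)%N -> measR G (Z p)) -> G [set w | (sup_roots Z w <= c%:E)%E].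
Proof.
move=> mZ; have -> : [set w | (sup_roots Z w <= c%:E)%E] =
    \bigcap_p [set w | (1 <= p)%N -> Z p w `^ (p%:R^-1) <= c].
  apply/seteqP; split => w /=; first by move/sup_roots_leP => h p _; exact: h.
  by move=> h; apply/sup_roots_leP => p p1; exact: h.
apply: G_bigcap => -[|p].
  have -> : [set w | (1 <= 0)%N -> Z 0%N w `^ (0%:R^-1) <= c] = setT.
    by apply/seteqP; split => w.
  exact: G_setT.
have -> : [set w | (1 <= p.+1)%N -> Z p.+1 w `^ (p.+1%:R^-1) <= c] =
    Z p.+1 @^-1` ([set: R] `&` (fun x => x `^ (p.+1%:R^-1)) @^-1` `]-oo, c]).
  apply/seteqP; split => w /=; first by move=> h; split => //; rewrite in_itv /=; exact: h.
  by move=> [_]; rewrite in_itv.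
by apply: (mZ p.+1 isT); apply: measurable_powR => //; exact: measurable_itv.
Qed.

Lemma measurable_ge_level (S : T -> R) (c : R) :
  measurable_fun setT S -> measurable [set w | c <= S w].
Proof.
move=> mS; have -> : [set w | c <= S w] = setT `&` S @^-1` `[c, +oo[.
  by apply/seteqP; split => w /=; rewrite in_itv /= andbT //; case.
exact: mS.
Qed.

Lemma sup_roots_level_pow_le (S : T -> R) (Z : nat -> T -> R) (c c' : R) (p : nat) :
  (forall w, 0 <= S w) -> measurable_fun setT S ->
  (forall p, (1 <= p)%N -> cond_exp_version P G (fun w => S w ^+ p) (Z p)) ->
  0 <= c -> 0 <= c' -> (1 <= p)%N ->
  ((c' ^+ p)%:E * P ([set w | (sup_roots Z w <= c%:E)%E] `&` [set w | (c' <= S w)%R])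
    <= (c ^+ p)%:E)%E.
Proof.
move=> S_ge0 mS hZ c0 c'0 p1.
set A := [set w | (sup_roots Z w <= c%:E)%E]; set B := A `&` _.
have GA : G A by apply: G_sup_roots_le => q q1; case: (hZ q q1) => _ [].
have mA := hGF GA.
have mB : measurable B by apply: measurableI => //; exact: measurable_ge_level.
have [intS [_ [intZ hZA]]] := hZ p p1.
have ub : (\int[P]_(w in A) (S w ^+ p)%:E <= (c ^+ p)%:E * P A)%E.
  rewrite -hZA // -integral_cst //; apply: ae_le_integral => //.
  - exact: integrableS measurableT mA (@subsetT _ _) intZ.
  - exact: finite_measure_integrable_cst.
  apply: filterS (cond_exp_pow_ge0 S_ge0 hZ) => w Z_ge0 Aw.
  rewrite lee_fin -powR_invn_le ?Z_ge0 //.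
  by move/sup_roots_leP: Aw; apply.
have lb : ((c' ^+ p)%:E * P B <= \int[P]_(w in A) (S w ^+ p)%:E)%E.
  rewrite -integral_cst //.
  apply: (@le_trans _ _ (\int[P]_(w in B) (S w ^+ p)%:E)%E).
    apply: le_integral => //.
    - exact: finite_measure_integrable_cst.
    - exact: integrableS measurableT mB (@subsetT _ _) intS.
    move=> w /set_mem [_ hw] /=; rewrite lee_fin.
    by apply: lerXn2r => //; rewrite nnegrE.
  apply: ge0_subset_integral => //.
  - by apply: measurableT_comp => //; exact: measurable_funS (measurable_funX _ mS).
  - by move=> w _; rewrite lee_fin exprn_ge0.
  - by move=> w [].
apply: le_trans (le_trans lb ub) _.
rewrite (P_fineK mA) -EFinM lee_fin ler_piMr ?exprn_ge0 //.
by rewrite -lee_fin -P_fineK //; exact: probability_le1.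
Qed.

Lemma sup_roots_level_null (S : T -> R) (Z : nat -> T -> R) (c c' : R) :
  (forall w, 0 <= S w) -> measurable_fun setT S ->
  (forall p, (1 <= p)%N -> cond_exp_version P G (fun w => S w ^+ p) (Z p)) ->
  0 <= c -> c < c' ->
  {ae P, forall w, (sup_roots Z w <= c%:E)%E -> S w < c'}.
Proof.
move=> S_ge0 mS hZ c0 cc'; have c'_gt0 := le_lt_trans c0 cc'.
pose B := [set w | (sup_roots Z w <= c%:E)%E] `&` [set w | c' <= S w].
have mB : measurable B.
  apply: measurableI; last exact: measurable_ge_level.
  by apply/hGF/G_sup_roots_le => p p1; case: (hZ p p1) => _ [].
suff B0 : P B = 0%E.
  apply: filterS (ae_not_null mB B0) => w nB Aw.
  by rewrite ltNge; apply/negP => hw; exact: nB.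
set b := fine (P B).
have le_pow p : (1 <= p)%N -> c' ^+ p * b <= c ^+ p.
  move=> p1; rewrite -lee_fin EFinM -P_fineK //.
  exact: sup_roots_level_pow_le S_ge0 mS hZ c0 (ltW c'_gt0) p1.
rewrite (P_fineK mB); apply/eqP; rewrite eqe eq_le fine_ge0 ?measure_ge0 // andbT leNgt.
apply/negP => b_gt0.
have ha : 0 <= c / c' < 1 by rewrite divr_ge0 ?(ltW c'_gt0) //= ltr_pdivrMr // mul1r.
have [p hp] := exists_exprn_lt ha b_gt0.
have hp' : (c / c') ^+ p.+1 < b.
  case/andP: ha => ha0 /ltW ha1.
  by apply: le_lt_trans hp; rewrite exprS ler_piMl ?exprn_ge0.
have := le_pow p.+1 isT; rewrite leNgt => /negP; apply.
by move: hp'; rewrite expr_div_n ltr_pdivrMr ?exprn_gt0 // mulrC.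
Qed.

Lemma le_sup_roots (S : T -> R) (Z : nat -> T -> R) :
  (forall w, 0 <= S w) -> measurable_fun setT S ->
  (forall p, (1 <= p)%N -> cond_exp_version P G (fun w => S w ^+ p) (Z p)) ->
  {ae P, forall w, ((S w)%:E <= sup_roots Z w)%E}.
Proof.
move=> S_ge0 mS hZ.
have : {ae P, forall w (cc : rat * rat), 0 <= (ratr cc.1 : R) -> (ratr cc.1 : R) < ratr cc.2 ->
    (sup_roots Z w <= (ratr cc.1)%:E)%E -> S w < ratr cc.2}.
  apply: ae_forall_countable => -[c c'] /=.
  have [c0|_] := boolP (0 <= (ratr c : R)); last by apply: aeW.
  have [cc'|_] := boolP ((ratr c : R) < ratr c'); last by apply: aeW.
  by apply: filterS (sup_roots_level_null S_ge0 mS hZ c0 cc') => w h _ _.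
apply: filterS => w h; apply: lee_rat => c c' cc' hc.
have c0 : 0 <= (ratr c : R) by rewrite -lee_fin (le_trans (sup_roots_ge0 _ _) hc).
by rewrite lte_fin (h (c, c')).
Qed.

Lemma sup_roots_le (S : T -> R) (Z : nat -> T -> R) (E : T -> \bar R) :
  (forall w, 0 <= S w) ->
  (forall p, (1 <= p)%N -> cond_exp_version P G (fun w => S w ^+ p) (Z p)) ->
  (forall c : R, G [set w | (E w <= c%:E)%E]) ->
  {ae P, forall w, ((S w)%:E <= E w)%E} ->
  {ae P, forall w, (sup_roots Z w <= E w)%E}.
Proof.
move=> S_ge0 hZ mE SE.
have : {ae P, forall w (pc : nat * rat), (1 <= pc.1)%N ->
    (E w <= (ratr pc.2)%:E)%E -> Z pc.1 w <= ratr pc.2 ^+ pc.1}.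
  apply: ae_forall_countable => -[p c] /=.
  have [p1|_] := boolP (1 <= p)%N; last by apply: aeW.
  have SEp : {ae P, forall w, (E w <= (ratr c)%:E)%E -> S w ^+ p <= ratr c ^+ p}.
    apply: filterS SE => w hSE hEc.
    have Sc : S w <= ratr c by rewrite -lee_fin (le_trans hSE hEc).
    by apply: lerXn2r; rewrite ?nnegrE ?(le_trans (S_ge0 w) Sc) ?S_ge0.
  by apply: filterS (cond_exp_le_on (hZ p p1) (mE _) SEp) => w h _; exact: h.
move=> hB; apply: filterS2 (filterI (cond_exp_pow_ge0 S_ge0 hZ) SE) hB.
move=> w [Z_ge0 hSE] hb; apply: ge_ereal_sup => _ [p p1 <-].
apply: lee_rat => c c' cc' hEc.
have c0 : 0 <= (ratr c : R) by rewrite -lee_fin (le_trans _ (le_trans hSE hEc)) // lee_fin S_ge0.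
have le_c : Z p w `^ p%:R^-1 <= ratr c.
  by rewrite powR_invn_le ?Z_ge0 //; exact: hb (p, c) p1 hEc.
by rewrite lte_fin (le_lt_trans le_c cc').
Qed.

Lemma cond_esssup_version_level (S : T -> R) (E : T -> \bar R) :
  cond_esssup_version P G S E -> forall c : R, G [set w | (E w <= c%:E)%E].
Proof.
move=> [Z [hZ EZ]] c; have -> : E = sup_roots Z by apply/funext => w; rewrite EZ.
by apply: G_sup_roots_le => p p1; case: (hZ p p1) => _ [].
Qed.

Lemma le_cond_esssup_version (S : T -> R) (E : T -> \bar R) :
  (forall w, 0 <= S w) -> measurable_fun setT S ->
  cond_esssup_version P G S E -> {ae P, forall w, ((S w)%:E <= E w)%E}.
Proof.
by move=> S_ge0 mS [Z [hZ EZ]]; apply: filterS (le_sup_roots S_ge0 mS hZ) => w; rewrite EZ.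
Qed.

Lemma cond_esssup_version_le (S : T -> R) (E E' : T -> \bar R) :
  (forall w, 0 <= S w) -> cond_esssup_version P G S E ->
  (forall c : R, G [set w | (E' w <= c%:E)%E]) ->
  {ae P, forall w, ((S w)%:E <= E' w)%E} -> {ae P, forall w, (E w <= E' w)%E}.
Proof.
move=> S_ge0 [Z [hZ EZ]] mE' SE'.
by apply: filterS (sup_roots_le S_ge0 hZ mE' SE') => w; rewrite EZ.
Qed.

Lemma exists_cond_esssup_version (S : T -> R) (M : R) :
  (forall w, 0 <= S w) -> measurable_fun setT S -> {ae P, forall w, S w <= M} ->
  exists E, cond_esssup_version P G S E.
Proof.
move=> S_ge0 mS SM.
have M0 : 0 <= Num.max M 0 by rewrite le_max lexx orbT.
have int_pow p : P.-integrable setT (EFin \o (fun w => S w ^+ p)).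
  have mSp : measurable_fun setT (EFin \o (fun w => S w ^+ p)).
    by apply: measurableT_comp => //; exact: measurable_funX.
  apply/integrableP; split => //.
  apply: le_lt_trans (integral_le_bound (Num.max M 0 ^+ p)%:E _ mSp _ _) _ => //.
  - by rewrite lee_fin exprn_ge0.
  - apply: filterS SM => w h _ /=; rewrite lee_fin ger0_norm ?exprn_ge0 //.
    by apply: lerXn2r; rewrite ?nnegrE // (le_trans h) // le_max lexx.
  - by rewrite ltey_eq fin_numM // fin_num_measure.
have [Z hZ] := choice (fun p => exists_cond_exp_version hG hGF (int_pow p)).
by exists (sup_roots Z), Z; split => // p _; exact: hZ.
Qed.

End cond_exp_bounds.

Lemma Linf_abs_sub_bound d (T : measurableType d) (R : realType) (P : probability T R)
    (K : fieldType) (abs : K -> R) (S1 S2 : set (set T)) (X Y : T -> K) :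
  nonarch_local_field abs -> Linf P abs S1 X -> Linf P abs S2 Y ->
  exists M, {ae P, forall w, abs (X w - Y w) <= M}.
Proof.
move=> hK [_ [M1 XM1]] [_ [M2 YM2]]; exists (Num.max M1 M2).
apply: filterS2 XM1 YM2 => w XM YM; apply: le_trans (nlf_ultra hK (X w) (- Y w)) _.
by rewrite (absN hK) ge_max !le_max XM YM orbT.
Qed.

Theorem mainTheorem13 (d : measure_display) (T : measurableType d) (R : realType)
  (P : probability T R) (K : fieldType) (abs : K -> R)
  (hK : nonarch_local_field abs)
  (G : set (set T)) (hG : sigma_algebra setT G) (hGF : G `<=` measurable)
  (X : T -> K) (hX : Linf P abs measurable X)
  (Y0 : T -> K) (hY0 : condE P abs G X Y0)
  (eps : T -> \bar R) (heps : condnorm_version P abs G (fun w => X w - Y0 w) eps)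
  (Y : T -> K) :
  condE P abs G X Y <->
  Linf P abs G Y /\ {ae P, forall w, ((abs (X w - Y w))%:E <= eps w)%E}.
Proof.
have S_ge0 w : 0 <= abs (X w - Y w) by exact: nlf_ge0.
split.
- move=> [hY Y_min]; split => //.
  have mS : measurable_fun setT (fun w => abs (X w - Y w)).
    by apply: measurable_abs_sub hK hX.1 _ => a r; exact/hGF/hY.1.
  have [M SM] := Linf_abs_sub_bound hK hX hY.
  have [e he] := exists_cond_esssup_version hG hGF S_ge0 mS SM.
  apply: filterS2 (le_cond_esssup_version hG hGF S_ge0 mS he) (Y_min Y0 hY0.1 _ _ he heps).
  by move=> w; apply: le_trans.
- move=> [hY S_le_eps]; split => // Z hZ e1 e2 he1 he2.
  have e1_le_eps := cond_esssup_version_le hG hGF S_ge0 he1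
    (cond_esssup_version_level hG heps) S_le_eps.
  by apply: filterS2 e1_le_eps (hY0.2 Z hZ eps e2 heps he2) => w; apply: le_trans.
Qed.
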